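(* With $\hat Q=\eta_0\mathcal X+\hat d$, $\mathcal X$, $\mathcal P=\gamma_0$ and the tilded oscillators as in the context, the state space (restricted to $b_0=0$) decomposes as (tilded-oscillator Fock space without zero modes) $\otimes$ ($\mathcal X,\mathcal P$ module) $\otimes$ ($\zeta_0,\eta_0$ module). Consider the two sectors built on $|\mathcal X=0\rangle$ (states $\sum_n|\psi_n\rangle\otimes\mathcal P^n|\mathcal X=0\rangle$) and on $|\mathcal P=0\rangle$ (states $\sum_n|\psi_n\rangle\otimes\mathcal X^n|\mathcal P=0\rangle$), with $|\psi_n\rangle$ arbitrary in the remaining factors. Then every class in the cohomology of $\hat Q$ in the first sector is represented by a state $|\psi\rangle\otimes|\mathcal X=0\rangle\otimes|\downarrow\rangle_{\zeta\eta}$, and every class in the second sector by a state $|\psi\rangle\otimes|\mathcal P=0\rangle\otimes|\uparrow\rangle_{\zeta\eta}$, where $|\psi\rangle$ is $\hat d$-closed in the Fock space of the tilded oscillators without zero modes; moreover two such representatives are $\hat Q$-cohomologous if and only if their $|\psi\rangle$'s differ by a $\hat d$-exact state. Hence in each sector the cohomology of $\hat Q$ is isomorphic to the cohomology of $\hat d$ on the Fock space of the tilded oscillators without zero modes.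
   Context: Modes: $x_n,\varphi_n$ with $[x_m,x_n]=[\varphi_m,\varphi_n]=m\delta_{m+n,0}$; fermionic $b_n,c_n$, $\{b_m,c_n\}=\delta_{m+n,0}$; fermionic $\zeta_n,\eta_n$, $\{\zeta_m,\eta_n\}=\delta_{m+n,0}$; bosonic $\beta_n,\gamma_n$, $[\gamma_m,\beta_n]=\delta_{m+n,0}$. $\hat Q$ is the relative BRST operator (the part of the light-cone BRST operator $Q_B$ without $b_0,c_0$), decomposed as $\hat Q=\eta_0\mathcal X+\hat d$ with $\mathcal X=\beta_0+\sum_{n\ne0}n\,c_n\zeta_{-n}$ and $\hat d$ independent of $\zeta_0,\eta_0$; $\mathcal P=\gamma_0$ so $[\mathcal X,\mathcal P]=1$. Tilded oscillators: $\tilde b_n=b_n+n\zeta_n\gamma_0$, $\tilde\eta_n=\eta_n+nc_n\gamma_0$ ($n\ne0$); these, with $c_n,\zeta_n,\beta_n,\gamma_n$ ($n\ne0$), commute with $\mathcal X,\mathcal P$, and $\hat d$ commutes with $\mathcal X$ and $\mathcal P$. $|\mathcal X=0\rangle$ is annihilated by $\mathcal X$, $|\mathcal P=0\rangle$ by $\mathcal P$. The $\zeta_0,\eta_0$ states: $\zeta_0|\downarrow\rangle_{\zeta\eta}=0$, $\eta_0|\uparrow\rangle_{\zeta\eta}=0$, $|\uparrow\rangle=\eta_0|\downarrow\rangle$. *)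

From HB Require Import structures.
From mathcomp Require Import all_boot all_order all_algebra.
Set Implicit Arguments. Unset Strict Implicit. Unset Printing Implicit Defensive.
Import Order.TTheory GRing.Theory Num.Theory.
Local Open Scope ring_scope.

(* V : the Fock space of the tilded oscillators without zero modes (an
   arbitrary K-vector space), d : V -> V the operator \hat d restricted to it.

   A state of a sector is a pair (a, b) of sequences nat -> V:
     a n  = component along  (P^n|X=0>  resp.  X^n|P=0>) (x) |down>
     b n  = component along  (P^n|X=0>  resp.  X^n|P=0>) (x) |up>
   States are finite sums: both sequences have finite support. *)

Definition finsupp (V : zmodType) (f : nat -> V) : Prop :=
  exists N : nat, forall n : nat, (N <= n)%N -> f n = 0.

Definition state (V : zmodType) : Type := ((nat -> V) * (nat -> V))%type.

Definition fin_state (V : zmodType) (s : state V) : Prop :=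
  finsupp s.1 /\ finsupp s.2.

Definition state0 (V : zmodType) : state V := (fun _ => 0, fun _ => 0).

Definition state_sub (V : zmodType) (s t : state V) : state V :=
  (fun n => s.1 n - t.1 n, fun n => s.2 n - t.2 n).

(* Action of X on the X,P-module of sector 1: basis P^n|X=0>,
   X P^n |X=0> = n P^(n-1) |X=0>  (since [X,P]=1, X|X=0>=0). *)
Definition X_sector1 (K : nzRingType) (V : lmodType K) (f : nat -> V) : nat -> V :=
  fun n => (n.+1)%:R *: f n.+1.

(* Action of X on the X,P-module of sector 2: basis X^n|P=0>,
   X X^n |P=0> = X^(n+1) |P=0>. *)
Definition X_sector2 (V : zmodType) (f : nat -> V) : nat -> V :=
  fun n => if n is m.+1 then f m else 0.

(* Qhat = eta_0 X + dhat on (zeta_0,eta_0 module) (x) (X,P module) (x) V,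
   with eta_0|down> = |up>, eta_0|up> = 0, and dhat (fermionic, commuting
   with X and P, anticommuting with eta_0) acting as d on V with the Koszul
   sign (+1 on |down>, -1 on |up>):
     Qhat(|down>(x)a + |up>(x)b) = |down>(x) d a + |up>(x)(X a - d b). *)
Definition Qhat (V : zmodType) (Xop : (nat -> V) -> nat -> V) (d : V -> V)
  (s : state V) : state V :=
  (fun n => d (s.1 n), fun n => Xop s.1 n - d (s.2 n)).

(* the state |psi> (x) |vacuum of X,P module> (x) |down>, resp. |up> *)
Definition delta0 (V : zmodType) (psi : V) : nat -> V :=
  fun n => if n is 0 then psi else 0.
Definition emb_down (V : zmodType) (psi : V) : state V := (delta0 psi, fun _ => 0).
Definition emb_up (V : zmodType) (psi : V) : state V := (fun _ => 0, delta0 psi).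

(* The content of the theorem for one sector: the representatives emb psi,
   psi d-closed, are Qhat-closed; every Qhat-closed state is Qhat-cohomologous
   to such a representative; two representatives are Qhat-cohomologous iff
   the psi's differ by a d-exact vector.  (This is exactly the statement that
   psi |-> emb psi induces an isomorphism H(d, V) ~= H(Qhat, sector).) *)
Definition sector_cohomology_iso (V : zmodType) (Xop : (nat -> V) -> nat -> V)
  (d : V -> V) (emb : V -> state V) : Prop :=
  (forall psi : V, d psi = 0 -> Qhat Xop d (emb psi) = state0 V) /\
  (forall s : state V, fin_state s -> Qhat Xop d s = state0 V ->
     exists psi : V, d psi = 0 /\
       exists w : state V, fin_state w /\ state_sub s (emb psi) = Qhat Xop d w) /\
  (forall psi psi' : V, d psi = 0 -> d psi' = 0 ->
     ((exists w : state V, fin_state w /\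
         state_sub (emb psi) (emb psi') = Qhat Xop d w)
      <-> exists chi : V, psi - psi' = d chi)).

From HB Require Import structures.
From mathcomp Require Import all_boot all_order all_algebra.
From Stdlib Require Import FunctionalExtensionality.
Import Order.TTheory GRing.Theory Num.Theory.
Local Open Scope ring_scope.

(* In both sectors a Qhat-closed state s = |down> (x) a + |up> (x) b satisfies
   X a = d b, and Qhat-exactness kills everything but the vacuum component:
   in the sector on |X=0> the contracting homotopy P N^-1 (N the number of P
   quanta) moves the b-part into the image of Qhat, leaving a_0 |down>;
   in the sector on |P=0> the operator X is injective, so it can be inverted on
   b, leaving b_0 |up>.  The surviving components are d-closed, and they are
   Qhat-exact exactly when they are d-exact. *)

Section States.

Variable V : zmodType.

Lemma state_ext (s t : state V) :
  (forall n, s.1 n = t.1 n) -> (forall n, s.2 n = t.2 n) -> s = t.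
Proof.
case: s t => [a b] [a' b'] /= eq_a eq_b.
by rewrite (functional_extensionality _ _ eq_a) (functional_extensionality _ _ eq_b).
Qed.

Lemma finsupp0 : finsupp (fun _ : nat => (0 : V)).
Proof. by exists 0%N. Qed.

Lemma finsupp_delta0 (v : V) : finsupp (delta0 v).
Proof. by exists 1%N; case. Qed.

Lemma finsupp_shift (f : nat -> V) : finsupp f -> finsupp (fun n => f n.+1).
Proof. by case=> N fN; exists N => n le_Nn; apply/fN/leqW. Qed.

Lemma finsupp_X_sector2 (f : nat -> V) : finsupp f -> finsupp (X_sector2 f).
Proof. by case=> N fN; exists N.+1 => -[|n] //= le_Nn; apply: fN. Qed.

Lemma state_sub_emb_down (psi psi' : V) :
  state_sub (emb_down psi) (emb_down psi') = emb_down (psi - psi').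
Proof. by apply: state_ext => -[|n] /=; rewrite ?subr0. Qed.

Lemma state_sub_emb_up (psi psi' : V) :
  state_sub (emb_up psi) (emb_up psi') = emb_up (psi - psi').
Proof. by apply: state_ext => -[|n] /=; rewrite ?subr0. Qed.

Lemma emb_down0 : emb_down (0 : V) = state0 V.
Proof. by apply: state_ext => -[]. Qed.

Lemma emb_up0 : emb_up (0 : V) = state0 V.
Proof. by apply: state_ext => -[]. Qed.

Variables (Xop : (nat -> V) -> nat -> V) (d : {additive V -> V}).

Lemma delta0_raddf (v : V) n : d (delta0 v n) = delta0 (d v) n.
Proof. by case: n => [|n] /=; rewrite ?raddf0. Qed.

Lemma Qhat_eq0 (s : state V) :
  Qhat Xop d s = state0 V <->
  (forall n, d (s.1 n) = 0) /\ (forall n, Xop s.1 n = d (s.2 n)).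
Proof.
split=> [Qs0 | [da0 Xa_db]].
  by split=> n; [rewrite -[d _]/((Qhat Xop d s).1 n) Qs0 |
    apply/eqP; rewrite -subr_eq0 -[_ - _]/((Qhat Xop d s).2 n) Qs0].
by apply: state_ext => n /=; rewrite ?da0 ?Xa_db ?subrr.
Qed.

End States.

Section DownSector.

Variables (K : numFieldType) (V : lmodType K) (d : {linear V -> V}).

Local Notation Q := (Qhat (@X_sector1 K V) d).

Lemma X_sector1_delta0 (psi : V) n : X_sector1 (delta0 psi) n = 0.
Proof. exact: scaler0. Qed.

Lemma Qhat_emb_down (psi : V) : Q (emb_down psi) = emb_down (d psi).
Proof.
apply: state_ext => n /=; first exact: delta0_raddf.
by rewrite X_sector1_delta0 raddf0 subr0.
Qed.

Lemma emb_down_exact (psi : V) :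
  (exists w, fin_state w /\ emb_down psi = Q w) <-> exists chi, psi = d chi.
Proof.
split=> [[w [_ Ew]] | [chi ->]].
  by exists (w.1 0%N); rewrite -[psi]/((emb_down psi).1 0%N) Ew.
exists (emb_down chi); split; last by rewrite Qhat_emb_down.
by split; [apply: finsupp_delta0 | apply: finsupp0].
Qed.

(* On this sector X_sector2 is the action of P, so this is P N^-1 applied to
   the |up> components, moved to |down>. *)
Definition down_homotopy (s : state V) : state V :=
  (X_sector2 (fun n => n.+1%:R^-1 *: s.2 n), fun _ => 0).

Lemma down_homotopyP (s : state V) : Q s = state0 V ->
  state_sub s (emb_down (s.1 0%N)) = Q (down_homotopy s).
Proof.
case/Qhat_eq0=> _ Xa_db.
have n1_neq0 n : n.+1%:R != 0 :> K by rewrite pnatr_eq0.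
apply: state_ext => [[|n]|n] /=; rewrite ?subrr ?raddf0 ?oppr0 ?addr0 ?subr0 //.
  by rewrite linearZ_LR -Xa_db /X_sector1 scalerA mulVf ?scale1r.
by rewrite /X_sector1 /= scalerA mulfV ?scale1r.
Qed.

Lemma sector1_cohomology_iso : sector_cohomology_iso (@X_sector1 K V) d (@emb_down V).
Proof.
split; [|split].
- by move=> psi dpsi0; rewrite Qhat_emb_down dpsi0 emb_down0.
- move=> s [fin_a fin_b] Qs0; exists (s.1 0%N); split.
    by case/Qhat_eq0: Qs0 => /(_ 0%N).
  exists (down_homotopy s); split; last exact: down_homotopyP.
  by split; [apply/finsupp_X_sector2; case: fin_b => N bN; exists N => n /bN -> |
    apply: finsupp0]; rewrite ?scaler0.
- by move=> psi psi' _ _; rewrite state_sub_emb_down; apply: emb_down_exact.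
Qed.

End DownSector.

Section UpSector.

Variables (V : zmodType) (d : {additive V -> V}).

Local Notation Q := (Qhat (@X_sector2 V) d).

Lemma Qhat_emb_up (psi : V) : Q (emb_up psi) = emb_up (- d psi).
Proof. by apply: state_ext => -[|n] /=; rewrite ?raddf0 ?oppr0 ?addr0 ?subr0 ?sub0r. Qed.

Lemma emb_up_exact (psi : V) :
  (exists w, fin_state w /\ emb_up psi = Q w) <-> exists chi, psi = d chi.
Proof.
split=> [[w [_ Ew]] | [chi ->]].
  by exists (- w.2 0%N); rewrite raddfN -sub0r -[0 - _]/((Q w).2 0%N) -Ew.
exists (emb_up (- chi)); split; last by rewrite Qhat_emb_up raddfN opprK.
by split; [apply: finsupp0 | apply: finsupp_delta0].
Qed.

(* The left inverse of X applied to the |up> components, moved to |down>. *)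
Definition up_homotopy (s : state V) : state V := (fun n => s.2 n.+1, fun _ => 0).

Lemma up_homotopyP (s : state V) : Q s = state0 V ->
  state_sub s (emb_up (s.2 0%N)) = Q (up_homotopy s).
Proof.
case/Qhat_eq0=> _ Xa_db.
apply: state_ext => [n|[|n]] /=; rewrite ?subrr ?raddf0 ?oppr0 ?addr0 ?subr0 //.
by rewrite -[s.1 n]/(X_sector2 s.1 n.+1) Xa_db.
Qed.

Lemma sector2_cohomology_iso : sector_cohomology_iso (@X_sector2 V) d (@emb_up V).
Proof.
split; [|split].
- by move=> psi dpsi0; rewrite Qhat_emb_up dpsi0 oppr0 emb_up0.
- move=> s [_ fin_b] Qs0; exists (s.2 0%N); split.
    by case/Qhat_eq0: Qs0 => _ /(_ 0%N).
  exists (up_homotopy s); split; last exact: up_homotopyP.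
  by split; [apply: finsupp_shift | apply: finsupp0].
- by move=> psi psi' _ _; rewrite state_sub_emb_up; apply: emb_up_exact.
Qed.

End UpSector.

Theorem theorem2 (K : numClosedFieldType) (V : lmodType K)
  (d : {linear V -> V}) (hd2 : forall v : V, d (d v) = 0) :
  sector_cohomology_iso (@X_sector1 K V) d (@emb_down V) /\
  sector_cohomology_iso (@X_sector2 V) d (@emb_up V).
Proof. by split; [apply: sector1_cohomology_iso | apply: sector2_cohomology_iso]. Qed.
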